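(* Consider the iterates of SAS-ADMM (so $L\succeq0$ and $(\tau,s)\in\Delta$) and let $k\ge1$. With $\tilde G_k$ as defined in the context, define $$\omega_0=\Big(2-\tau-s-\frac{(1-s)^2}{1+\tau}\Big)\beta,\qquad \omega_1=\frac{(1-s)^2}{1+\tau}\beta,\qquad \omega_2=\frac{1-\tau}{1+\tau}.$$ Then $\omega_0,\omega_1,\omega_2\ge0$ and $$\|w^k-\tilde w^k\|_{\tilde G_k}^2\ge\|x^k-x^{k+1}\|_{\mathcal D_k}^2+\omega_0\|Ax^{k+1}+By^{k+1}-b\|^2+\omega_1\big(\|Ax^{k+1}+By^{k+1}-b\|^2-\|Ax^k+By^k-b\|^2\big)+\omega_2\big(\|y^k-y^{k+1}\|_L^2-\|y^{k-1}-y^k\|_L^2\big).$$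
   Context: Setting. $\mathcal X\subset\mathbb R^{n_1}$, $\mathcal Y\subset\mathbb R^{n_2}$ are nonempty closed convex sets; $A\in\mathbb R^{n\times n_1}$, $B\in\mathbb R^{n\times n_2}$, $b\in\mathbb R^n$; $g:\mathcal Y\to\mathbb R\cup\{+\infty\}$ is proper convex; $f=\frac1N\sum_{j=1}^N f_j$, each $f_j$ real-valued, convex and continuously differentiable on an open set containing $\mathcal X$. The problem is $\min\{f(x)+g(y): x\in\mathcal X,\ y\in\mathcal Y,\ Ax+By=b\}$. A fixed symmetric positive definite $H\in\mathbb R^{n_1\times n_1}$ and a constant $\nu>0$ satisfy $\|\nabla f_j(x_1)-\nabla f_j(x_2)\|_{H^{-1}}\le \nu\|x_1-x_2\|_H$ for all $x_1,x_2\in\mathcal X$ and all $j$. For a symmetric matrix $G$, $\|v\|_G^2:=v^\top G v$ (also when $G$ is indefinite); $G_1\succeq G_2$ means $G_1-G_2$ is positive semidefinite. $\mathcal L_\beta(x,y,\lambda)=f(x)+g(y)-\lambda^\top(Ax+By-b)+\frac\beta2\|Ax+By-b\|^2$. $\Delta:=\{(\tau,s)\in\mathbb R^2:\ \tau+s>0,\ \tau\le1,\ -\tau^2-s^2-\tau s+\tau+s+1\ge0\}$. Subroutine xsub. Inputs: $x^k\in\mathcal X$, $\breve x^k$, $h\in\mathbb R^{n_1}$, an integer $m_k\ge1$, $\eta_k>0$, a symmetric matrix $M_k$. Set $x_1=x^k$, $\breve x_1=\breve x^k$. For $t=1,\dots,m_k$: draw $\xi_t$ uniformly from $\{1,\dots,N\}$,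 independently of everything generated before; set $\beta_t=2/(t+1)$, $\gamma_t=2/(t\eta_k)$, $\hat x_t=\beta_t\breve x_t+(1-\beta_t)x_t$, $d_t=\nabla f_{\xi_t}(\hat x_t)+e_t$ where $e_t$ is a random vector whose conditional expectation given all previously generated random quantities and $\xi_t$ is $0$; $\breve x_{t+1}=\arg\min_{x\in\mathcal X}\{\langle d_t+h,x\rangle+\frac{\gamma_t}2\|x-\breve x_t\|_H^2+\frac12\|x-x^k\|_{M_k}^2\}$; $x_{t+1}=\beta_t\breve x_{t+1}+(1-\beta_t)x_t$. Output $x^{k+1}=x_{m_k+1}$, $\breve x^{k+1}=\breve x_{m_k+1}$. Algorithm SAS-ADMM. Parameters: $\beta>0$, the matrix $H$, a symmetric positive semidefinite $L\in\mathbb R^{n_2\times n_2}$, $(\tau,s)\in\Delta$. Start: $(x^0,y^0,\lambda^0)\in\mathcal X\times\mathcal Y\times\mathbb R^n$, $\breve x^0=x^0$. For $k=0,1,\dots$: choose an integer $m_k\ge1$, $\eta_k>0$, and a symmetric $M_k$ with $\mathcal D_k:=M_k-\beta A^\top A\succeq0$; set $h^k=-A^\top[\lambda^k-\beta(Ax^k+By^k-b)]$; compute $(x^{k+1},\breve x^{k+1})$ by xsub with inputs $x^k,\breve x^k,h^k,m_k,\eta_k,M_k$; $\lambda^{k+1/2}=\lambda^k-\tau\beta(Ax^{k+1}+By^k-b)$; $y^{k+1}\in\arg\min_{y\in\mathcal Y}\mathcal L_\beta(x^{k+1},y,\lambda^{k+1/2})+\frac12\|y-y^k\|_L^2$ (a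 minimizer is assumed to exist); $\lambda^{k+1}=\lambda^{k+1/2}-s\beta(Ax^{k+1}+By^{k+1}-b)$. Notation. $w^k=(x^k;y^k;\lambda^k)$; $\tilde\lambda^k=\lambda^k-\beta(Ax^{k+1}+By^k-b)$; $\tilde w^k=(x^{k+1};y^{k+1};\tilde\lambda^k)$; $$\tilde G_k=\begin{bmatrix}\mathcal D_k&0&0\\0&L+(1-s)\beta B^\top B&(s-1)B^\top\\0&(s-1)B&\frac{2-\tau-s}{\beta}I\end{bmatrix}.$$ *)

From HB Require Import structures.
From mathcomp Require Import all_boot all_order all_algebra.
From mathcomp Require Import all_classical all_reals all_analysis.
Set Implicit Arguments. Unset Strict Implicit. Unset Printing Implicit Defensive.
Import Order.TTheory GRing.Theory Num.Theory.
Import numFieldNormedType.Exports.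
Local Open Scope classical_set_scope.
Local Open Scope ring_scope.

Section Defs.
Variable R : realType.

(* ||v||_G^2 := v^T G v  (also for indefinite G) *)
Definition qf (p : nat) (G : 'M[R]_p) (v : 'cV[R]_p) : R := (v^T *m G *m v) 0 0.

Definition ip (p : nat) (u v : 'cV[R]_p) : R := (u^T *m v) 0 0.
Definition sqn (p : nat) (v : 'cV[R]_p) : R := ip v v.

Definition sym_mx (p : nat) (G : 'M[R]_p) : Prop := G^T = G.
(* G1 \succeq G2 for sym_mx matrices: G1 - G2 positive semidefinite *)
Definition psd (p : nat) (G : 'M[R]_p) : Prop := forall v : 'cV[R]_p, 0 <= qf G v.
Definition spd (p : nat) (G : 'M[R]_p) : Prop :=
  sym_mx G /\ forall v : 'cV[R]_p, v != 0 -> 0 < qf G v.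

Definition convex_set (p : nat) (S : set 'cV[R]_p) : Prop :=
  forall u v t, S u -> S v -> 0 <= t <= 1 -> S (t *: u + (1 - t) *: v).
Definition nonempty_closed_convex (p : nat) (S : set 'cV[R]_p) : Prop :=
  S !=set0 /\ closed S /\ convex_set S.

Definition convex_fun_on (p : nat) (S : set 'cV[R]_p) (h : 'cV[R]_p -> R) : Prop :=
  forall u v t, S u -> S v -> 0 <= t <= 1 ->
    h (t *: u + (1 - t) *: v) <= t * h u + (1 - t) * h v.

Definition proper_convex_on (p : nat) (S : set 'cV[R]_p) (g : 'cV[R]_p -> \bar R) : Prop :=
  (forall y, S y -> g y != -oo%E) /\ (exists y, S y /\ (g y < +oo)%E) /\
  (forall u v t, S u -> S v -> 0 <= t <= 1 ->
     (g (t *: u + (1 - t) *: v)%R <= t%:E * g u + (1 - t)%:E * g v)%E).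

Definition C1_on_open_nbhd (p : nat) (S : set 'cV[R]_p) (h : 'cV[R]_p -> R)
    (dh : 'cV[R]_p -> 'cV[R]_p) : Prop :=
  exists U : set 'cV[R]_p, open U /\ S `<=` U /\
    (forall x, U x -> differentiable h x /\ forall v, 'd h x v = ip (dh x) v) /\
    {within U, continuous dh}.

Definition Delta (tau s : R) : Prop :=
  0 < tau + s /\ tau <= 1 /\ 0 <= - tau ^+ 2 - s ^+ 2 - tau * s + tau + s + 1.

Definition is_argmin (p : nat) (S : set 'cV[R]_p) (phi : 'cV[R]_p -> R) (z : 'cV[R]_p) : Prop :=
  S z /\ forall x, S x -> phi z <= phi x.
Definition is_argmin_ext (p : nat) (S : set 'cV[R]_p) (phi : 'cV[R]_p -> \bar R)
    (z : 'cV[R]_p) : Prop :=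
  S z /\ forall x, S x -> (phi z <= phi x)%E.

(* One run (a realization) of subroutine xsub. xi t is the realized index drawn
   at inner step t (indices 'I_N stand for {1,..,N}); e t is the realized noise
   vector; xs t, bxs t are x_t, breve x_t. *)
Definition xsub_run (n1 N : nat) (X : set 'cV[R]_n1)
    (gradf : 'I_N -> 'cV[R]_n1 -> 'cV[R]_n1) (H : 'M[R]_n1)
    (xk bxk h : 'cV[R]_n1) (m : nat) (eta : R) (M : 'M[R]_n1)
    (xi : nat -> 'I_N) (e : nat -> 'cV[R]_n1) (xs bxs : nat -> 'cV[R]_n1) : Prop :=
  xs 1%N = xk /\ bxs 1%N = bxk /\
  forall t : nat, (1 <= t <= m)%N ->
    let beta_t : R := 2 / (t%:R + 1) in
    let gamma_t : R := 2 / (t%:R * eta) in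
    let hatx := beta_t *: bxs t + (1 - beta_t) *: xs t in
    let d := gradf (xi t) hatx + e t in
    is_argmin X (fun x => ip (d + h) x + gamma_t / 2 * qf H (x - bxs t)
                          + 1 / 2 * qf M (x - xk)) (bxs t.+1) /\
    xs t.+1 = beta_t *: bxs t.+1 + (1 - beta_t) *: xs t.

Definition aug_lag (n n1 n2 : nat) (A : 'M[R]_(n, n1)) (B : 'M[R]_(n, n2)) (b : 'cV[R]_n)
    (f : 'cV[R]_n1 -> R) (g : 'cV[R]_n2 -> \bar R) (beta : R)
    (x : 'cV[R]_n1) (y : 'cV[R]_n2) (lam : 'cV[R]_n) : \bar R :=
  ((f x)%:E + g y + (- ip lam (A *m x + B *m y - b)%R + beta / 2 * sqn (A *m x + B *m y - b)%R)%R%:E)%E.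

Definition Gtilde (n n1 n2 : nat) (B : 'M[R]_(n, n2)) (L : 'M[R]_n2) (beta s tau : R)
    (D : 'M[R]_n1) : 'M[R]_(n1 + (n2 + n)) :=
  block_mx D 0 0
    (block_mx (L + ((1 - s) * beta) *: (B^T *m B)) ((s - 1) *: B^T)
              ((s - 1) *: B) (((2 - tau - s) / beta) *: 1%:M)).

Definition favg (n1 N : nat) (fj : 'I_N -> 'cV[R]_n1 -> R) (x : 'cV[R]_n1) : R :=
  N%:R^-1 * \sum_(j < N) fj j x.

(* (x, bx, y, lam) are the iterates of one realization of SAS-ADMM, with the
   per-iteration choices m k, eta k, M k. *)
Definition sas_admm_iterates (n n1 n2 N : nat) (X : set 'cV[R]_n1) (Y : set 'cV[R]_n2)
    (A : 'M[R]_(n, n1)) (B : 'M[R]_(n, n2)) (b : 'cV[R]_n)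
    (f : 'cV[R]_n1 -> R) (g : 'cV[R]_n2 -> \bar R)
    (gradf : 'I_N -> 'cV[R]_n1 -> 'cV[R]_n1) (H : 'M[R]_n1)
    (beta : R) (L : 'M[R]_n2) (tau s : R)
    (m : nat -> nat) (eta : nat -> R) (M : nat -> 'M[R]_n1)
    (x bx : nat -> 'cV[R]_n1) (y : nat -> 'cV[R]_n2) (lam : nat -> 'cV[R]_n) : Prop :=
  X (x 0%N) /\ Y (y 0%N) /\ bx 0%N = x 0%N /\
  forall k : nat,
    [/\ (1 <= m k)%N, 0 < eta k, sym_mx (M k) & psd (M k - beta *: (A^T *m A))] /\
    let hk := - (A^T *m (lam k - beta *: (A *m x k + B *m y k - b))) in
    (exists (xi : nat -> 'I_N) (e : nat -> 'cV[R]_n1) (xs bxs : nat -> 'cV[R]_n1),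
        xsub_run X gradf H (x k) (bx k) hk (m k) (eta k) (M k) xi e xs bxs /\
        x k.+1 = xs (m k).+1 /\ bx k.+1 = bxs (m k).+1) /\
    let lamh := lam k - (tau * beta) *: (A *m x k.+1 + B *m y k - b) in
    is_argmin_ext Y (fun v => (aug_lag A B b f g beta (x k.+1) v lamh
                               + (1 / 2 * qf L (v - y k))%:E)%E) (y k.+1) /\
    lam k.+1 = lamh - (s * beta) *: (A *m x k.+1 + B *m y k.+1 - b).

End Defs.

From Pilot Require Import Defs.
From HB Require Import structures.
From mathcomp Require Import all_boot all_order all_algebra.
From mathcomp Require Import all_classical all_reals all_analysis.
From mathcomp Require Import ring lra.
Import Order.TTheory GRing.Theory Num.Theory.
Import numFieldNormedType.Exports.
Local Open Scope classical_set_scope.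
Local Open Scope ring_scope.

(* Write u = y^k - y^{k+1}, u' = y^{k-1} - y^k, a = B u and
   r^i = A x^i + B y^i - b.  The proof has three ingredients.
   1. Since lambda^k - lambda~^k = beta (r^{k+1} + a), expanding the quadratic
      form of Gtilde_k at w^k - w~^k gives
        |x^k - x^{k+1}|_{D_k}^2 + |u|_L^2 + beta (1-tau) |a|^2
          + 2 beta (1-tau) <r^{k+1}, a> + beta (2-tau-s) |r^{k+1}|^2.
   2. The y-subproblem is convex, so its minimizer satisfies a first-order
      optimality condition (obtained by comparing it with points on a
      segment).  Adding this condition at two consecutive iterations, the
      g-values cancel and the multiplier updates bound |u|_L^2 - <u, L u'>.
   3. A purely scalar inequality, valid for (tau, s) in Delta, combines this
      bound with |u - u'|_L^2 >= 0 and |(1-tau) a + (1-s) r^k|^2 >= 0.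
   The file develops the inner-product calculus, then the y-subproblem, then
   the scalar estimates, and derives the theorem from them at the end. *)

Section InnerProduct.
Context {R : realType}.

Lemma ipDl {p} (u v w : 'cV[R]_p) : ip (u + v) w = ip u w + ip v w.
Proof. by rewrite /ip linearD /= mulmxDl mxE. Qed.

Lemma ipDr {p} (u v w : 'cV[R]_p) : ip w (u + v) = ip w u + ip w v.
Proof. by rewrite /ip mulmxDr mxE. Qed.

Lemma ipZl {p} (c : R) (u w : 'cV[R]_p) : ip (c *: u) w = c * ip u w.
Proof. by rewrite /ip linearZ /= -scalemxAl mxE. Qed.

Lemma ipZr {p} (c : R) (u w : 'cV[R]_p) : ip w (c *: u) = c * ip w u.
Proof. by rewrite /ip -scalemxAr mxE. Qed.

Lemma ipNl {p} (u w : 'cV[R]_p) : ip (- u) w = - ip u w.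
Proof. by rewrite -(scaleN1r u) ipZl mulN1r. Qed.

Lemma ipNr {p} (u w : 'cV[R]_p) : ip w (- u) = - ip w u.
Proof. by rewrite -(scaleN1r u) ipZr mulN1r. Qed.

Lemma ipC {p} (u v : 'cV[R]_p) : ip u v = ip v u.
Proof. by rewrite /ip -[v^T *m u]trmxK trmx_mul trmxK [in RHS]mxE. Qed.

Lemma ip_mull {p q} (C : 'M[R]_(q, p)) (u : 'cV[R]_p) (v : 'cV[R]_q) :
  ip (C *m u) v = ip u (C^T *m v).
Proof. by rewrite /ip trmx_mul mulmxA. Qed.

Lemma ip_sym {p} {G : 'M[R]_p} (u v : 'cV[R]_p) : G^T = G ->
  ip u (G *m v) = ip v (G *m u).
Proof. by move=> symG; rewrite ipC ip_mull symG. Qed.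

Lemma ip_col {p q} (u u' : 'cV[R]_p) (v v' : 'cV[R]_q) :
  ip (col_mx u v) (col_mx u' v') = ip u u' + ip v v'.
Proof. by rewrite /ip tr_col_mx mul_row_col mxE. Qed.

Lemma sqn_ge0 {p} (v : 'cV[R]_p) : 0 <= sqn v.
Proof.
by rewrite /sqn /ip mxE; apply: sumr_ge0 => i _; rewrite mxE -expr2 sqr_ge0.
Qed.

Lemma qfE {p} (G : 'M[R]_p) (v : 'cV[R]_p) : qf G v = ip v (G *m v).
Proof. by rewrite /qf /ip mulmxA. Qed.

Definition ipE := (@ipDl, @ipDr, @ipZl, @ipZr, @ipNl, @ipNr).

Lemma qfB {p} (G : 'M[R]_p) (u v : 'cV[R]_p) : G^T = G ->
  qf G (u - v) = qf G u - 2 * ip u (G *m v) + qf G v.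
Proof.
move=> symG; rewrite !qfE mulmxBr !ipE (ip_sym v u symG); ring.
Qed.

Lemma sqn_comb {p} (c d : R) (a v : 'cV[R]_p) :
  sqn (c *: a + d *: v) = c ^+ 2 * sqn a + 2 * c * d * ip a v + d ^+ 2 * sqn v.
Proof. by rewrite /sqn !ipE (ipC v a); ring. Qed.

End InnerProduct.

(* If t P + t^2 c >= 0 for all small t > 0, then P >= 0: this turns the
   comparison of a minimizer with points on a segment into a first-order
   condition. *)
Lemma ge0_of_small_steps (R : realFieldType) (P c : R) :
  (forall t, 0 < t <= 1 -> 0 <= t * P + t ^+ 2 * c) -> 0 <= P.
Proof.
move=> Ht; rewrite leNgt; apply/negP => P_lt0.
set D := `|c| + 1 - P.
have D_gt0 : 0 < D by rewrite /D; have := normr_ge0 c; lra.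
have t_gt0 : 0 < - P / D by apply: divr_gt0; lra.
have t_le1 : - P / D <= 1.
  by rewrite ler_pdivrMr // mul1r /D; have := normr_ge0 c; lra.
have := Ht (- P / D) (andb_true_intro (conj t_gt0 t_le1)).
have -> : - P / D * P + (- P / D) ^+ 2 * c = (c - D) * (P ^+ 2 / D ^+ 2).
  by field; rewrite gt_eqF.
rewrite leNgt => /negP; apply; rewrite pmulr_llt0; last first.
  by apply: divr_gt0; rewrite expr2; nra.
by have := ler_norm c; rewrite /D; lra.
Qed.

(* Replacing y1 by y2 in a residual; along the iteration this expresses
   lambda^k - lambda~^k as beta (r^{k+1} + B (y^k - y^{k+1})). *)
Lemma residual_shift (R : realType) (n n1 n2 : nat) (A : 'M[R]_(n, n1))
    (B : 'M[R]_(n, n2)) (b : 'cV[R]_n) (x2 : 'cV[R]_n1) (y1 y2 : 'cV[R]_n2) :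
  A *m x2 + B *m y1 - b = (A *m x2 + B *m y2 - b) + B *m (y1 - y2).
Proof. by rewrite mulmxBr; apply/matrixP=> i j; rewrite !mxE; ring. Qed.

Section YSubproblem.
Variables (R : realType) (n n1 n2 : nat) (Y : set 'cV[R]_n2)
  (A : 'M[R]_(n, n1)) (B : 'M[R]_(n, n2)) (b : 'cV[R]_n)
  (f : 'cV[R]_n1 -> R) (g : 'cV[R]_n2 -> \bar R) (beta : R) (L : 'M[R]_n2).
Hypothesis g_proper : proper_convex_on Y g.
Hypothesis Y_convex : Defs.convex_set Y.
Hypothesis L_sym : sym_mx L.

Definition ysub_obj (xx : 'cV[R]_n1) (yp : 'cV[R]_n2) (lh : 'cV[R]_n)
    (v : 'cV[R]_n2) : \bar R :=
  (aug_lag A B b f g beta xx v lh + (1 / 2 * qf L (v - yp))%:E)%E.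

Definition ysub_smooth (xx : 'cV[R]_n1) (yp : 'cV[R]_n2) (lh : 'cV[R]_n)
    (v : 'cV[R]_n2) : R :=
  f xx + (- ip lh (A *m xx + B *m v - b) + beta / 2 * sqn (A *m xx + B *m v - b))
  + 1 / 2 * qf L (v - yp).

Lemma ysub_objE xx yp lh v : g v \is a fin_num ->
  ysub_obj xx yp lh v = (fine (g v) + ysub_smooth xx yp lh v)%:E.
Proof.
move=> gv; rewrite /ysub_obj /aug_lag -(fineK gv) -!EFinD fineK //.
by congr EFin; rewrite /ysub_smooth; ring.
Qed.

Lemma ysub_smooth_line xx yp lh ys d (t : R) :
  ysub_smooth xx yp lh (ys + t *: d) = ysub_smooth xx yp lh ys
    + t * (ip (B *m d) (beta *: (A *m xx + B *m ys - b) - lh) + ip d (L *m (ys - yp)))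
    + t ^+ 2 * (beta / 2 * sqn (B *m d) + 1 / 2 * qf L d).
Proof.
rewrite /ysub_smooth.
have -> : A *m xx + B *m (ys + t *: d) - b = (A *m xx + B *m ys - b) + t *: (B *m d).
  by rewrite mulmxDr -scalemxAr addrA [LHS]addrAC.
have -> : ys + t *: d - yp = (ys - yp) + t *: d by rewrite addrAC.
move: (A *m xx + B *m ys - b) (ys - yp) => c e.
rewrite !qfE /sqn mulmxDr -scalemxAr !ipE.
by rewrite (ipC lh (B *m d)) (ipC c (B *m d)) (ip_sym e d L_sym); field.
Qed.

(* A minimizer lies in the domain of g, since g is finite somewhere on Y. *)
Lemma ysub_argmin_fin {xx yp lh ys} :
  is_argmin_ext Y (ysub_obj xx yp lh) ys -> g ys \is a fin_num.
Proof.
move=> [Yys ys_min]; have [g_gtNy [[y0 [Yy0 gy0]] _]] := g_proper.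
have gy0_fin : g y0 \is a fin_num by rewrite fin_numE g_gtNy //= lt_eqF.
have := ys_min y0 Yy0; rewrite (ysub_objE _ _ _ _ gy0_fin) /ysub_obj /aug_lag.
by rewrite fin_numE g_gtNy //=; case: (g ys) => [r| |].
Qed.

(* First-order optimality of the y-subproblem: comparing the minimizer ys with
   the points ys + t (z - ys) of Y and letting t -> 0. *)
Lemma ysub_optimality {xx yp lh ys z} :
  is_argmin_ext Y (ysub_obj xx yp lh) ys -> Y z -> g z \is a fin_num ->
  0 <= fine (g z) - fine (g ys)
       + ip (B *m (z - ys)) (beta *: (A *m xx + B *m ys - b) - lh)
       + ip (z - ys) (L *m (ys - yp)).
Proof.
move=> ys_min Yz gz_fin.
have gys_fin := ysub_argmin_fin ys_min.
move: ys_min => [Yys ys_min]; have [g_gtNy [_ g_convex]] := g_proper.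
set d := z - ys; set c := A *m xx + B *m ys - b; set e := ys - yp.
rewrite -addrA; set lin := (X in _ + X).
set quad := beta / 2 * sqn (B *m d) + 1 / 2 * qf L d.
apply: (@ge0_of_small_steps _ _ quad) => t /andP[t_gt0 t_le1].
set vt := ys + t *: d.
have t01 : 0 <= t <= 1 by apply/andP; split; lra.
have vtE : vt = t *: z + (1 - t) *: ys.
  by apply/matrixP=> i j; rewrite /vt /d !mxE; ring.
have Yvt : Y vt by rewrite vtE; exact: Y_convex.
have gvt_le := g_convex z ys t Yz Yys t01.
rewrite -vtE -(fineK gz_fin) -(fineK gys_fin) -!EFinM -EFinD in gvt_le.
have gvt_fin : g vt \is a fin_num.
  by rewrite fin_numE g_gtNy //= lt_eqF //; apply: le_lt_trans gvt_le (ltry _).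
rewrite -(fineK gvt_fin) lee_fin in gvt_le.
have := ys_min vt Yvt; rewrite !ysub_objE // lee_fin.
by rewrite /vt ysub_smooth_line -/c -/e -/d -/lin -/quad; lra.
Qed.

(* Adding the optimality conditions of two consecutive y-subproblems (with
   the multiplier updates of SAS-ADMM in between) cancels g and bounds
   |u|_L^2 - <u, L (y0 - y1)>, u = y1 - y2, by terms in B u. *)
Lemma ysub_consecutive {x1 x2 y0 y1 y2 lh1 lam1} {s tau : R} :
  is_argmin_ext Y (ysub_obj x1 y0 lh1) y1 ->
  lam1 = lh1 - (s * beta) *: (A *m x1 + B *m y1 - b) ->
  is_argmin_ext Y (ysub_obj x2 y1 (lam1 - (tau * beta) *: (A *m x2 + B *m y1 - b))) y2 ->
  qf L (y1 - y2) - ip (y1 - y2) (L *m (y0 - y1)) <=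
  beta * ((1 + tau) * ip (A *m x2 + B *m y2 - b) (B *m (y1 - y2))
          + tau * sqn (B *m (y1 - y2))
          - (1 - s) * ip (A *m x1 + B *m y1 - b) (B *m (y1 - y2))).
Proof.
move=> y1_min lam1E y2_min.
have opt1 := ysub_optimality y1_min (proj1 y2_min) (ysub_argmin_fin y2_min).
have opt2 := ysub_optimality y2_min (proj1 y1_min) (ysub_argmin_fin y1_min).
set u := y1 - y2 in opt1 opt2 *; set u' := y0 - y1 in opt1 opt2 *.
set r1 := A *m x1 + B *m y1 - b in lam1E opt1 opt2 *.
set r2 := A *m x2 + B *m y2 - b in opt1 opt2 *.
have res2 : A *m x2 + B *m y1 - b = r2 + B *m u by apply: residual_shift.
have e21 : y2 - y1 = - u by rewrite opprB.
have e10 : y1 - y0 = - u' by rewrite opprB.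
clearbody u u' r1 r2.
rewrite e21 e10 in opt1; rewrite e21 res2 lam1E in opt2.
rewrite !mulmxN !ipE in opt1 opt2; rewrite qfE /sqn.
rewrite (ipC r1 (B *m u)) (ipC r2 (B *m u)).
lra.
Qed.

End YSubproblem.

Arguments ysub_consecutive {R n n1 n2 Y A B b f g beta L} _ _ _ {x1 x2 y0 y1 y2 lh1 lam1 s tau}.

Section ScalarEstimates.
Context {R : realType} {beta tau s : R}.
Hypothesis beta_gt0 : 0 < beta.
Hypothesis tau_s_Delta : Delta tau s.

(* Delta forces tau > -1, so the weights below are well defined. *)
Lemma one_plus_tau_gt0 : 0 < 1 + tau.
Proof.
case: tau_s_Delta => ts_gt0 [tau_le1 quad_ge0].
by rewrite !expr2 in quad_ge0; nra.
Qed.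

(* The weights of the theorem are nonnegative; for omega0 this is exactly
   the quadratic constraint in the definition of Delta. *)
Lemma omega_ge0 :
  [/\ 0 <= (2 - tau - s - (1 - s) ^+ 2 / (1 + tau)) * beta,
      0 <= (1 - s) ^+ 2 / (1 + tau) * beta & 0 <= (1 - tau) / (1 + tau)].
Proof.
have tau1_gt0 := one_plus_tau_gt0.
case: tau_s_Delta => ts_gt0 [tau_le1 quad_ge0].
split.
- apply: mulr_ge0 (ltW beta_gt0).
  have -> : 2 - tau - s - (1 - s) ^+ 2 / (1 + tau) =
      (- tau ^+ 2 - s ^+ 2 - tau * s + tau + s + 1) / (1 + tau) by field; lra.
  by apply: divr_ge0; lra.
- by apply: mulr_ge0 (ltW beta_gt0); apply: divr_ge0; [apply: sqr_ge0 | lra].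
- by apply: divr_ge0; lra.
Qed.

(* Read Lu = |u|_L^2, Lu' = |u'|_L^2,
   Luu' = <u, L u'>, A2 = |a|^2, ar = <r, a>, ark = <r', a>, R2 = |r|^2,
   Rk2 = |r'|^2; the hypotheses are |u|_L^2 >= 0, |u - u'|_L^2 >= 0,
   |(1-tau) a + (1-s) r'|^2 >= 0 and the bound from the y-subproblems. *)
Lemma sufficient_decrease_scalar (Q Lu Lu' Luu' A2 ar ark R2 Rk2 : R) :
  0 <= Lu -> 0 <= Lu - 2 * Luu' + Lu' ->
  0 <= (1 - tau) ^+ 2 * A2 + 2 * (1 - tau) * (1 - s) * ark + (1 - s) ^+ 2 * Rk2 ->
  Lu - Luu' <= beta * ((1 + tau) * ar + tau * A2 - (1 - s) * ark) ->
  Q + (2 - tau - s - (1 - s) ^+ 2 / (1 + tau)) * beta * R2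
    + (1 - s) ^+ 2 / (1 + tau) * beta * (R2 - Rk2)
    + (1 - tau) / (1 + tau) * (Lu - Lu') <=
  Q + Lu + beta * (1 - tau) * A2 + 2 * beta * (1 - tau) * ar
    + beta * (2 - tau - s) * R2.
Proof.
move=> Lu_ge0 Ldiff_ge0 comb_ge0 ysub_bound.
have tau1_gt0 := one_plus_tau_gt0.
have [_ [tau_le1 _]] := tau_s_Delta.
have one_sub_tau_ge0 : 0 <= 1 - tau by rewrite subr_ge0.
rewrite -subr_ge0.
set gap := (X in 0 <= X).
have -> : gap = ((1 + tau) * Lu + (1 - tau) * (Lu - 2 * Luu' + Lu')
   + beta * ((1 - tau) ^+ 2 * A2 + 2 * (1 - tau) * (1 - s) * ark + (1 - s) ^+ 2 * Rk2)
   + 2 * (1 - tau) * (beta * ((1 + tau) * ar + tau * A2 - (1 - s) * ark)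
                      - (Lu - Luu'))) / (1 + tau).
  by rewrite /gap; field; lra.
apply: divr_ge0; last exact: ltW.
apply: addr_ge0; first apply: addr_ge0; first apply: addr_ge0.
- exact: mulr_ge0 (ltW tau1_gt0) Lu_ge0.
- exact: mulr_ge0 one_sub_tau_ge0 Ldiff_ge0.
- exact: mulr_ge0 (ltW beta_gt0) comb_ge0.
- by apply: mulr_ge0; [rewrite pmulr_rge0 | rewrite subr_ge0].
Qed.

End ScalarEstimates.

Lemma qf_Gtilde_step (R : realType) (n n1 n2 : nat) (B : 'M[R]_(n, n2))
    (L : 'M[R]_n2) (beta s tau : R) (D : 'M[R]_n1)
    (dx : 'cV[R]_n1) (u : 'cV[R]_n2) (r : 'cV[R]_n) : beta != 0 ->
  qf (Gtilde B L beta s tau D) (col_mx dx (col_mx u (beta *: (r + B *m u)))) =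
  qf D dx + qf L u + beta * (1 - tau) * sqn (B *m u)
    + 2 * beta * (1 - tau) * ip r (B *m u) + beta * (2 - tau - s) * sqn r.
Proof.
move=> beta_neq0.
rewrite qfE /Gtilde !mul_block_col !ip_col !mul0mx !addr0 !add0r ip_col.
rewrite mulmxDl -!scalemxAl -mulmxA mul1mx !ipE -!ip_mull !ipE.
rewrite !qfE /sqn (ipC (B *m u) r).
by field.
Qed.

Theorem theorem3p3 (R : realType) (n n1 n2 N : nat)
  (X : set 'cV[R]_n1) (Y : set 'cV[R]_n2)
  (A : 'M[R]_(n, n1)) (B : 'M[R]_(n, n2)) (b : 'cV[R]_n)
  (g : 'cV[R]_n2 -> \bar R)
  (fj : 'I_N -> 'cV[R]_n1 -> R) (gradf : 'I_N -> 'cV[R]_n1 -> 'cV[R]_n1)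
  (H : 'M[R]_n1) (nu : R) (beta : R) (L : 'M[R]_n2) (tau s : R)
  (m : nat -> nat) (eta : nat -> R) (M : nat -> 'M[R]_n1)
  (x bx : nat -> 'cV[R]_n1) (y : nat -> 'cV[R]_n2) (lam : nat -> 'cV[R]_n)
  (k : nat) :
  (0 < N)%N ->
  nonempty_closed_convex X -> nonempty_closed_convex Y ->
  proper_convex_on Y g ->
  (forall j, convex_fun_on X (fj j) /\ C1_on_open_nbhd X (fj j) (gradf j)) ->
  spd H -> 0 < nu ->
  (forall j x1 x2, X x1 -> X x2 ->
     Num.sqrt (qf (invmx H) (gradf j x1 - gradf j x2)) <= nu * Num.sqrt (qf H (x1 - x2))) ->
  0 < beta -> sym_mx L -> psd L -> Delta tau s ->
  sas_admm_iterates X Y A B b (favg fj) g gradf H beta L tau s m eta M x bx y lam ->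
  (1 <= k)%N ->
  let omega0 := (2 - tau - s - (1 - s) ^+ 2 / (1 + tau)) * beta in
  let omega1 := (1 - s) ^+ 2 / (1 + tau) * beta in
  let omega2 := (1 - tau) / (1 + tau) in
  let Dk := M k - beta *: (A^T *m A) in
  let r := fun i => A *m x i + B *m y i - b in
  let w := col_mx (x k) (col_mx (y k) (lam k)) in
  let lamt := lam k - beta *: (A *m x k.+1 + B *m y k - b) in
  let wt := col_mx (x k.+1) (col_mx (y k.+1) lamt) in
  [/\ 0 <= omega0, 0 <= omega1, 0 <= omega2 &
   qf (Gtilde B L beta s tau Dk) (w - wt) >=
     qf Dk (x k - x k.+1) + omega0 * sqn (r k.+1)
     + omega1 * (sqn (r k.+1) - sqn (r k))
     + omega2 * (qf L (y k - y k.+1) - qf L (y k.-1 - y k))].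
Proof.
move=> _ _ [_ [_ Y_convex]] g_proper _ _ _ _ beta_gt0 L_sym L_psd tau_s_Delta iter.
case: k => [//|k] _ omega0 omega1 omega2 Dk r w lamt wt.
have [_ [_ [_ step]]] := iter.
have [_ [_ [y1_min lam1E]]] := step k.
have [_ [_ [y2_min _]]] := step k.+1.
have ysub_bound := ysub_consecutive g_proper Y_convex L_sym y1_min lam1E y2_min.
have wE : w - wt = col_mx (x k.+1 - x k.+2)
    (col_mx (y k.+1 - y k.+2) (beta *: (r k.+2 + B *m (y k.+1 - y k.+2)))).
  rewrite /w /wt /lamt /r -residual_shift.
  by rewrite opp_col_mx !add_col_mx opp_col_mx add_col_mx subKr.
rewrite wE qf_Gtilde_step ?gt_eqF //.
have [omega0_ge0 omega1_ge0 omega2_ge0] := omega_ge0 beta_gt0 tau_s_Delta.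
split => //; rewrite /omega0 /omega1 /omega2 /r /=.
apply: (sufficient_decrease_scalar beta_gt0 tau_s_Delta); last exact: ysub_bound.
- exact: L_psd.
- by rewrite -qfB //; apply: L_psd.
- have := sqn_ge0 ((1 - tau) *: (B *m (y k.+1 - y k.+2)) + (1 - s) *: r k.+1).
  by rewrite sqn_comb ipC.
Qed.
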